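(* Let $k,\ell,n$ be integers with $2\le\ell<k/2$, $n\ge1$, and let $G_1$, $U_i$, $H_1^1$, $H_1^2$, $H_2$, $tr_1$ and $\min$ be as in the context. Let $s\ge1$ and let $P=(e,e_1,\dots,e_s,e')$ be an $(\ell,k)$-path (edges listed in order) all of whose edges lie in $H_1^1\cup H_1^2\cup H_2$, such that the set of edges of $P$ lying in $H_1^1$ is exactly $\{e,e'\}$. Then: (a) every edge of $P$ lying in $H_1^2$ belongs to $\{e_1,e_s\}$; (b) if both $e_1$ and $e_s$ lie in $H_1^2$ and $e_1\neq e_s$, then $s=2$; (c) for every $i=1,\dots,s$, $\min(e_i)\in tr_1(e)\cap tr_1(e')$.
   Context: Let $G_1$ be a graph on vertex set $[n]=\{1,\dots,n\}$. Let $\{A_i,B_i: i=1,\dots,2n\}$ be $4n$ pairwise disjoint finite sets with $|A_i|=2\lfloor k/2\rfloor+\ell$ for $1\le i\le n$ and $|A_i|=2k-2\ell-3$ for $n+1\le i\le 2n$; put $U_i=A_i\cup B_i$ and $V=\bigcup_{i=1}^{2n}U_i$. For $S\subseteq V$ let $tr(S)=\{i:S\cap U_i\ne\emptyset\}$, $tr_1(S)=tr(S)\cap[n]$, $\min(S)=\min tr(S)$. Define $H_1^1$ as the set of $k$-subsets $e\subseteq V$ such that for some edge $\{i,j\}$ of $G_1$, $tr_1(e)=\{i,j\}$, $|A_i\cap e|\ge\lfloor k/2\rfloor$ and $|A_j\cap e|\ge\lfloor k/2\rfloor$. Define $H_1^2$ as the set of $k$-subsets $e\subseteq V$ such that for some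 $i\in[n]$, $tr(e)=\{i,n+i\}$, $|A_i\cap e|=\ell+1$ and $|A_{n+i}\cap e|=k-\ell-1$. Let $H_2$ be the set of $k$-subsets $e\subseteq V$ with $|e\cap U_{\min(e)}|\ge k-\ell+1$. An $(\ell,k)$-path is a $k$-graph with distinct vertices $v_1,\dots,v_s$, $s\equiv\ell\pmod{k-\ell}$, $s\ge k$, and edges $\{v_{i(k-\ell)+1},\dots,v_{i(k-\ell)+k}\}$, $i=0,\dots,(s-k)/(k-\ell)$. *)

From mathcomp Require Import all_boot.
Set Implicit Arguments. Unset Strict Implicit. Unset Printing Implicit Defensive.

(* Model of the vertex set V: a finite type T (= V); every vertex lies in a
   unique part U_i, given by u : T -> 'I_(n+n) (0-based: part i of the paper
   is index i-1; the part "n+i" of the paper is rshift n (i-1)); the predicate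
   a marks the vertices lying in some A_i (so A_i = U_i ∩ a, B_i = U_i \ a). *)
Section Hypergraphs.
Variables (T : finType) (n : nat) (u : T -> 'I_(n + n)) (a : pred T).

Definition Aset (i : 'I_(n + n)) : {set T} := [set x | (u x == i) && a x].
Definition Uset (i : 'I_(n + n)) : {set T} := [set x | u x == i].

Definition tr (S : {set T}) : {set 'I_(n + n)} := [set u x | x in S].
Definition tr1 (S : {set T}) : {set 'I_n} := [set i : 'I_n | lshift n i \in tr S].
(* min(S) = min tr(S) (as a natural number; meaningful for nonempty S) *)
Definition mintr (S : {set T}) : nat := \big[minn/(n + n)]_(x in S) (u x : nat).

Variables (k l : nat) (G1 : rel 'I_n).

Definition inH11 (e : {set T}) : bool :=
  (#|e| == k) &&
  [exists i : 'I_n, exists j : 'I_n,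
     [&& G1 i j, tr1 e == [set i; j],
         k./2 <= #|e :&: Aset (lshift n i)| &
         k./2 <= #|e :&: Aset (lshift n j)| ]].

Definition inH12 (e : {set T}) : bool :=
  (#|e| == k) &&
  [exists i : 'I_n,
     [&& tr e == [set lshift n i; rshift n i],
         #|e :&: Aset (lshift n i)| == l.+1 &
         #|e :&: Aset (rshift n i)| == k - l - 1 ]].

Definition inH2 (e : {set T}) : bool :=
  (#|e| == k) && (k - l + 1 <= #|[set x in e | (u x : nat) == mintr e]|).

End Hypergraphs.

(* The t-th edge (t = 0,1,...) of the (l,k)-path with vertex sequence
   v_0, ..., v_(N-1) (0-based): {v_j | t(k-l) <= j < t(k-l)+k}. *)
Definition pedge (T : finType) (k l N : nat) (v : 'I_N -> T) (t : nat) : {set T} :=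
  [set v j | j : 'I_N & (t * (k - l) <= j) && (j < t * (k - l) + k)].

From mathcomp Require Import all_boot all_order zify.

(* Consecutive edges of the path share l >= 2 vertices and edges two apart are
   disjoint (as 2l < k).  All vertices of an H_1^2 edge lie in U_i and U_(n+i)
   with i = min, and an H_2 edge has more than k - l vertices in U_min; hence
   consecutive middle edges e_t, e_(t+1) have the same min modulo n, and the
   same min if both lie in H_2.  An H_1^1 edge has at most one vertex outside
   the parts of [n], so min e_1 = i lies in tr_1(e), and likewise min e_s in
   tr_1(e').  If some middle min differed from i, it would be n + i, and the
   first change away from i and the next change back to i would force two
   H_1^2 edges of index i at distance at least 2; their disjoint traces on
   A_(n+i) have 2(k - l - 1) > |A_(n+i)| vertices.  So every middle min is i,
   which is (c); (a) and (b) are the same count on A_i for e, an inner H_1^2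
   edge and e', and on A_(n+i) for e_1 and e_s. *)

Set Implicit Arguments. Unset Strict Implicit. Unset Printing Implicit Defensive.

Section Cards.
Variable T : finType.
Implicit Types A B C X : {set T}.

Lemma disjoint_leq_card A B X :
  [disjoint A & B] -> A \subset X -> B \subset X -> #|A| + #|B| <= #|X|.
Proof.
move=> dAB sAX sBX; rewrite -cardsUI (disjoint_setI0 dAB) cards0 addn0.
by apply: subset_leq_card; rewrite subUset sAX.
Qed.

Lemma disjoint3_leq_card A B C X :
  [disjoint A & B] -> [disjoint A & C] -> [disjoint B & C] ->
  A \subset X -> B \subset X -> C \subset X -> #|A| + #|B| + #|C| <= #|X|.
Proof.
move=> dAB dAC dBC sAX sBX sCX.
rewrite -(cardsUI A B) (disjoint_setI0 dAB) cards0 addn0.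
apply: disjoint_leq_card sCX; last by rewrite subUset sAX.
by rewrite -setI_eq0 setIUl (disjoint_setI0 dAC) (disjoint_setI0 dBC) setU0.
Qed.

End Cards.

Section PathEdges.
Variables (T : finType) (k l N : nat) (v : 'I_N -> T).
Hypothesis hv : injective v.

Lemma mem_pedge t (j : 'I_N) :
  (v j \in pedge k l v t) = (t * (k - l) <= j < t * (k - l) + k).
Proof. by rewrite mem_imset // inE. Qed.

Lemma pedge_disjoint t t' :
  2 * l <= k -> t.+2 <= t' -> [disjoint pedge k l v t & pedge k l v t'].
Proof.
move=> hlk htt; apply/pred0P => x /=; apply/negbTE/andP.
case=> /imsetP [j]; rewrite inE => /andP [_ hj] ->; rewrite mem_pedge => /andP [hj' _].
have := leq_mul htt (leqnn (k - l)); rewrite !mulSn; lia.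
Qed.

Lemma pedge_overlap t :
  l <= k -> t.+1 * (k - l) + k <= N -> l <= #|pedge k l v t :&: pedge k l v t.+1|.
Proof.
move=> hlk hN; have ltN (i : 'I_l) : t.+1 * (k - l) + i < N.
  by have := ltn_ord i; lia.
have inj : injective (fun i => v (Ordinal (ltN i))).
  by move=> i i' /hv/(congr1 val)/addnI/val_inj.
have sub : [set v (Ordinal (ltN i)) | i : 'I_l] \subset pedge k l v t :&: pedge k l v t.+1.
  apply/subsetP => _ /imsetP [i _ ->]; rewrite inE !mem_pedge /= !mulSn.
  by have := ltn_ord i; lia.
by have := subset_leq_card sub; rewrite card_imset // card_ord.
Qed.

Lemma pedge_neq t t' :
  l < k -> t < t' -> t * (k - l) < N -> pedge k l v t != pedge k l v t'.
Proof.
move=> hlk htt hN; apply/negP => /eqP e.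
have : v (Ordinal hN) \in pedge k l v t by rewrite mem_pedge /=; lia.
rewrite e mem_pedge /=; have := leq_mul htt (leqnn (k - l)); rewrite mulSn; lia.
Qed.

End PathEdges.

Section Edges.
Variables (T : finType) (n : nat) (u : T -> 'I_(n + n)) (a : pred T).
Variables (k l : nat) (G1 : rel 'I_n).
Hypothesis G1irr : irreflexive G1.

Lemma tr1P (e : {set T}) (i : 'I_n) :
  reflect (exists2 x, x \in e & u x = lshift n i) (i \in tr1 u e).
Proof. by rewrite inE; apply: (iffP imsetP) => -[x xe hx]; exists x. Qed.

Lemma mintr_le (S : {set T}) x : x \in S -> mintr u S <= u x.
Proof.
move=> xS; rewrite /mintr -minEnat.
exact: (@Order.TotalTheory.bigmin_le_cond _ nat _ (n + n) x (mem S) (fun y => u y : nat)).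
Qed.

Lemma mintr_eq (S : {set T}) x :
  x \in S -> {in S, forall y, u x <= u y} -> mintr u S = u x.
Proof.
move=> xS xmin; apply/eqP; rewrite eqn_leq mintr_le //=.
apply: (big_ind (fun m => u x <= m)) => [|p q|y /xmin] //; first exact/ltnW/ltn_ord.
by rewrite leq_min => -> ->.
Qed.

Lemma disjoint_Aset (c c' : 'I_(n + n)) :
  c != c' -> [disjoint Aset u a c & Aset u a c'].
Proof.
move=> cc'; apply/pred0P => x /=; rewrite !inE; apply/negbTE.
by apply: contra cc' => /and3P [/andP [/eqP <- _] /eqP ->].
Qed.

Lemma inH11P e : inH11 u a k G1 e -> exists i j : 'I_n, [/\ i != j,
  tr1 u e = [set i; j], k./2 <= #|e :&: Aset u a (lshift n i)|
                      & k./2 <= #|e :&: Aset u a (lshift n j)|].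
Proof.
case/andP => _ /existsP [i /existsP [j /and4P [Gij /eqP tr1e hi hj]]].
by exists i, j; split=> //; apply: contraTneq Gij => ->; rewrite G1irr.
Qed.

Lemma inH11_cardA e (j : 'I_n) :
  inH11 u a k G1 e -> j \in tr1 u e -> k./2 <= #|e :&: Aset u a (lshift n j)|.
Proof.
case/andP => _ /existsP [i /existsP [i' /and4P [_ /eqP -> hi hi']]].
by rewrite !inE => /orP [] /eqP ->.
Qed.

Lemma inH11_low_meet e f : inH11 u a k G1 e -> 1 < #|e :&: f| ->
  exists2 w, w \in e :&: f & u w < n.
Proof.
move=> he ef; have ek : #|e| = k := eqP (andP he).1.
have [i [j [ij _ hi hj]]] := inH11P he.
apply/exists_inP; apply: contraLR ef => /exists_inPn high; rewrite -leqNgt.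
have dAf (c : 'I_n) : [disjoint e :&: Aset u a (lshift n c) & e :&: f].
  apply/pred0P => x /=; apply/negbTE/andP => -[/setIP [_]].
  by rewrite inE => /andP [/eqP xc _] /high; rewrite xc /= ltn_ord.
have dAA : [disjoint e :&: Aset u a (lshift n i) & e :&: Aset u a (lshift n j)].
  apply: disjointW (subsetIr _ _) (subsetIr _ _) (disjoint_Aset _).
  by rewrite (inj_eq (@lshift_inj _ _)).
have := disjoint3_leq_card dAA (dAf i) (dAf j) (subsetIl _ _) (subsetIl _ _) (subsetIl _ _).
by rewrite ek; have := odd_double_half k; have := leq_b1 (odd k); lia.
Qed.

Lemma inH12_index g : inH12 u a k l g -> exists i : 'I_n, [/\ mintr u g = i,
  {in g, forall x, u x %% n = i}, #|g :&: Aset u a (lshift n i)| = l.+1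
                                & #|g :&: Aset u a (rshift n i)| = k - l - 1].
Proof.
case/andP => _ /existsP [i /and3P [/eqP trg /eqP cl /eqP cr]].
have ug x : x \in g -> u x = lshift n i \/ u x = rshift n i.
  by move=> xg; have := imset_f u xg; rewrite -/(tr u g) trg !inE => /orP [] /eqP; [left|right].
exists i; split => //.
- have /imsetP [x xg xi] : lshift n i \in tr u g by rewrite trg !inE eqxx.
  by rewrite (mintr_eq xg) -?xi // => y /ug [] -> /=; lia.
- by move=> x /ug [] -> /=; [exact: modn_small | rewrite modnDl modn_small].
Qed.

Lemma inH12_low g x : inH12 u a k l g -> x \in g -> u x < n -> (u x : nat) = mintr u g.
Proof.
by case/inH12_index => i [-> res _ _] xg xn; rewrite -(res x xg) modn_small.
Qed.

Lemma inH11_notH12 e : inH11 u a k G1 e -> ~~ inH12 u a k l e.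
Proof.
case/inH11P => [i [j [ij tr1e _ _]]]; apply/negP => he.
have [x xe xi] : exists2 x, x \in e & u x = lshift n i by apply/tr1P; rewrite tr1e !inE eqxx.
have [y ye yj] : exists2 y, y \in e & u y = lshift n j.
  by apply/tr1P; rewrite tr1e !inE eqxx orbT.
move/eqP: ij; apply; apply: ord_inj.
by have := inH12_low he xe; have := inH12_low he ye; rewrite xi yj /= => -> // ->.
Qed.

Lemma inH2_min_meet g f : inH2 u k l g -> l <= #|g :&: f| ->
  exists2 w, w \in g :&: f & (u w : nat) = mintr u g.
Proof.
case/andP => /eqP gk; set M := [set x in g | _ == _] => hM gf.
have sMg : M \subset g by apply/subsetP => x; rewrite inE => /andP [].
have [dis|] := boolP [disjoint M & g :&: f].
  by have := disjoint_leq_card dis sMg (subsetIl _ _); lia.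
rewrite -setI_eq0 => /set0Pn [w /setIP []]; rewrite inE => /andP [_ /eqP wm] wgf.
by exists w.
Qed.

Lemma inH2_adj_mintr f g : inH2 u k l f -> inH2 u k l g -> l <= #|f :&: g| ->
  mintr u f = mintr u g.
Proof.
move=> hf hg fg; have [w /setIP [_ wg] wf] := inH2_min_meet hf fg.
have gf : l <= #|g :&: f| by rewrite setIC.
have [w' /setIP [_ w'f] w'g] := inH2_min_meet hg gf.
by have := mintr_le wg; have := mintr_le w'f; lia.
Qed.

Lemma adj_mintr_mod f g : 0 < l ->
  inH12 u a k l f || inH2 u k l f -> inH12 u a k l g || inH2 u k l g ->
  l <= #|f :&: g| -> mintr u f = mintr u g %[mod n].
Proof.
have H12_adj f' g' : inH12 u a k l f' -> inH12 u a k l g' || inH2 u k l g' ->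
    0 < l -> l <= #|g' :&: f'| -> mintr u f' = mintr u g' %[mod n].
  move=> /inH12_index [i [fi res _ _]] hg' l0 gf.
  have [w /setIP [_ wf] wg] : exists2 w, w \in g' :&: f' & u w = mintr u g' %[mod n].
    case/orP: hg' => [/inH12_index [i' [gi res' _ _]] | /inH2_min_meet/(_ gf) [w wgf wm]].
      have /card_gt0P [w wgf] : 0 < #|g' :&: f'| by lia.
      have /setIP [wg _] := wgf.
      by exists w; rewrite // res' // gi modn_small.
    by exists w; rewrite // wm.
  by rewrite -wg res // fi modn_small.
move=> l0 hf hg fg; case/orP: (hf) => [f12 | f2]; first by apply: H12_adj; rewrite // setIC.
case/orP: (hg) => [g12 | g2]; first exact/esym/H12_adj.
by rewrite (inH2_adj_mintr f2 g2 fg).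
Qed.

Lemma adj_inH11_mintr_tr1 e g : 2 <= l -> inH11 u a k G1 e ->
  inH12 u a k l g || inH2 u k l g -> l <= #|g :&: e| ->
  exists2 j : 'I_n, mintr u g = j & j \in tr1 u e.
Proof.
move=> hl he hg ge; have ef : 1 < #|e :&: g| by rewrite setIC; lia.
have [w /setIP [we wg] wn] := inH11_low_meet he ef.
have [w' /setIP [_ w'e] w'g] : exists2 w', w' \in g :&: e & (u w' : nat) = mintr u g.
  case/orP: hg => [g12 | /inH2_min_meet/(_ ge) //].
  by exists w; [apply/setIP | apply: inH12_low].
have lt : mintr u g < n := leq_ltn_trans (mintr_le wg) wn.
by exists (Ordinal lt) => //; apply/tr1P; exists w' => //; apply: val_inj.
Qed.

Lemma inH12_same_index_meet f g :
  (forall i : 'I_n, #|Aset u a (rshift n i)| = 2 * k - 2 * l - 3) -> l.+1 < k ->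
  inH12 u a k l f -> inH12 u a k l g -> mintr u f = mintr u g -> ~~ [disjoint f & g].
Proof.
move=> hA2 lk /inH12_index [i [-> _ _ fA]] /inH12_index [j [-> _ _ gA]] /ord_inj ij.
subst j; apply/negP => dfg.
have := disjoint_leq_card (disjointW (subsetIl _ _) (subsetIl _ _) dfg)
  (subsetIr f (Aset u a (rshift n i))) (subsetIr g _).
by rewrite fA gA hA2; lia.
Qed.

Lemma inH11_inH12_inH11_meet e g e' (j : 'I_n) :
  (forall i : 'I_n, #|Aset u a (lshift n i)| = 2 * k./2 + l) ->
  inH11 u a k G1 e -> inH11 u a k G1 e' -> inH12 u a k l g ->
  mintr u g = j -> j \in tr1 u e -> j \in tr1 u e' ->
  [disjoint e & g] -> [disjoint e & e'] -> [disjoint g & e'] -> False.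
Proof.
move=> hA1 he he' /inH12_index [i [-> _ gA _]] /ord_inj <- je je' deg dee' dge'.
have dI (A B : {set T}) (dAB : [disjoint A & B]) :
    [disjoint A :&: Aset u a (lshift n i) & B :&: Aset u a (lshift n i)].
  exact: disjointW (subsetIl _ _) (subsetIl _ _) dAB.
have := disjoint3_leq_card (dI _ _ deg) (dI _ _ dee') (dI _ _ dge')
  (subsetIr e (Aset u a (lshift n i))) (subsetIr g _) (subsetIr e' _).
by rewrite hA1 gA; have := inH11_cardA he je; have := inH11_cardA he' je'; lia.
Qed.

End Edges.

Lemma exists_switch (b : nat -> bool) i j : i <= j -> b i -> ~~ b j ->
  exists2 p, i <= p < j & b p && ~~ b p.+1.
Proof.
move=> /subnK <-; elim: (j - i) => [|d IH] bi; first by rewrite add0n bi.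
rewrite addSn => nbd; case: (boolP (b (d + i))) => [bd | /IH [//|p /andP [ip pd] hp]].
  by exists (d + i); [lia | rewrite bd].
by exists p; rewrite // ip ltnS ltnW.
Qed.

Section PathArgument.
Variables (T : finType) (n : nat) (u : T -> 'I_(n + n)) (a : pred T).
Variables (k l s : nat) (G1 : rel 'I_n) (E : nat -> {set T}).
Hypotheses (hl : 2 <= l) (hlk : l.+1 < k) (G1irr : irreflexive G1) (hs : 1 <= s).
Hypothesis hA1 : forall i : 'I_n, #|Aset u a (lshift n i)| = 2 * k./2 + l.
Hypothesis hA2 : forall i : 'I_n, #|Aset u a (rshift n i)| = 2 * k - 2 * l - 3.
Hypotheses (E0 : inH11 u a k G1 (E 0)) (Es : inH11 u a k G1 (E s.+1)).
Hypothesis Emid : forall t, 1 <= t <= s -> inH12 u a k l (E t) || inH2 u k l (E t).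
Hypothesis Eadj : forall t, t <= s -> l <= #|E t :&: E t.+1|.
Hypothesis Edisj : forall t t', t.+2 <= t' -> t' <= s.+1 -> [disjoint E t & E t'].

Lemma first_mid_mintr : exists2 j : 'I_n, mintr u (E 1) = j & j \in tr1 u (E 0).
Proof.
by apply: adj_inH11_mintr_tr1 E0 (Emid _) _ => //; rewrite setIC Eadj.
Qed.

Lemma last_mid_mintr : exists2 j : 'I_n, mintr u (E s) = j & j \in tr1 u (E s.+1).
Proof. by apply: adj_inH11_mintr_tr1 Es (Emid _) (Eadj _) => //; rewrite leqnn hs. Qed.

Lemma mid_mintr_mod t : 1 <= t <= s -> mintr u (E t) = mintr u (E 1) %[mod n].
Proof.
elim: t => [//|[//|t] IH] /andP [_ ts].
rewrite -IH; last by rewrite /= (ltnW ts).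
by apply/esym/(adj_mintr_mod _ (Emid _) (Emid _) (Eadj _)); lia.
Qed.

Lemma mid_switch_H12 t : 1 <= t -> t < s -> mintr u (E t) != mintr u (E t.+1) ->
  inH12 u a k l (E t) || inH12 u a k l (E t.+1).
Proof.
move=> t1 ts; apply: contraR; rewrite negb_or => /andP [f12 g12].
have f2 : inH2 u k l (E t) by have := Emid (t := t); rewrite (negbTE f12) /=; apply; lia.
have g2 : inH2 u k l (E t.+1) by have := Emid (t := t.+1); rewrite (negbTE g12) /=; apply; lia.
by rewrite (inH2_adj_mintr f2 g2 (Eadj (ltnW ts))).
Qed.

Lemma mid_mintr_const t : 1 <= t <= s -> mintr u (E t) = mintr u (E 1).
Proof.
have [j hj _] := first_mid_mintr.
have low_eq t' : 1 <= t' <= s -> mintr u (E t') < n -> mintr u (E t') = mintr u (E 1).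
  by move=> ht' lt; have := mid_mintr_mod ht'; rewrite hj !modn_small.
have nH12 t' : 1 <= t' <= s -> mintr u (E t') != mintr u (E 1) -> ~~ inH12 u a k l (E t').
  move=> ht' ne; apply: contra ne => /inH12_index [i [hi _ _ _]].
  by apply/eqP/low_eq; rewrite ?hi.
have bs : mintr u (E s) == mintr u (E 1).
  have [j' hj' _] := last_mid_mintr; apply/eqP/low_eq; rewrite ?hj' ?leqnn ?hs //.
move=> /andP [t1 ts]; apply/eqP; apply: contraT => nbt.
pose b t' := mintr u (E t') == mintr u (E 1).
have [p /andP [p1 pt] /andP [bp nbp]] := exists_switch (b := b) t1 (eqxx _) nbt.
have [q /andP [tq qs] /andP [nbq bq]] := exists_switch (b := predC b) ts nbt (introT negPn bs).
have Ep : inH12 u a k l (E p).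
  have neq : mintr u (E p) != mintr u (E p.+1) by rewrite (eqP bp) eq_sym.
  have /orP [//|Ep1] := mid_switch_H12 p1 (leq_trans pt ts) neq.
  by exfalso; move: Ep1; apply/negP/nH12 => //; lia.
have Eq : inH12 u a k l (E q.+1).
  have neq : mintr u (E q) != mintr u (E q.+1) by rewrite (eqP (negPn bq)).
  have /orP [Eq|//] := mid_switch_H12 (leq_trans t1 tq) qs neq.
  by exfalso; move: Eq; apply/negP/nH12 => //; lia.
have same : mintr u (E p) = mintr u (E q.+1) by rewrite (eqP bp) (eqP (negPn bq)).
by move: (inH12_same_index_meet hA2 hlk Ep Eq same); rewrite Edisj //; lia.
Qed.

Lemma mid_mintr_tr1 t : 1 <= t <= s ->
  exists2 j : 'I_n, mintr u (E t) = j & j \in tr1 u (E 0) :&: tr1 u (E s.+1).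
Proof.
move=> ht; have [j hj j0] := first_mid_mintr; have [j' hj' js] := last_mid_mintr.
have ej : j' = j by apply: ord_inj; rewrite -hj -hj' mid_mintr_const // leqnn hs.
by exists j; [rewrite mid_mintr_const | rewrite inE j0 -ej js].
Qed.

Lemma mid_H12_position t : t <= s.+1 -> inH12 u a k l (E t) -> t = 1 \/ t = s.
Proof.
move=> ts Et; have [t0|t_gt0] := posnP t.
  by move: Et; rewrite t0 (negbTE (inH11_notH12 l G1irr E0)).
have [tS|tNS] := eqVneq t s.+1.
  by move: Et; rewrite tS (negbTE (inH11_notH12 l G1irr Es)).
have [->|t1] := eqVneq t 1; first by left.
have [->|tns] := eqVneq t s; first by right.
have ht : 1 <= t <= s by lia.
have [j hj /setIP [j0 js]] := mid_mintr_tr1 ht.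
exfalso; apply: (inH11_inH12_inH11_meet hA1 E0 Es Et hj j0 js); apply: Edisj; lia.
Qed.

Lemma mid_H12_pair : inH12 u a k l (E 1) -> inH12 u a k l (E s) -> E 1 <> E s -> s = 2.
Proof.
move=> E1 Es' neq; have [s1|s2] : s = 1 \/ 2 <= s by lia.
  by rewrite s1 in neq.
have [//|s3] : s = 2 \/ 3 <= s by lia.
have same : mintr u (E 1) = mintr u (E s) by rewrite mid_mintr_const // leqnn hs.
by move: (inH12_same_index_meet hA2 hlk E1 Es' same); rewrite Edisj.
Qed.

End PathArgument.

Theorem proposition3p4
  (k l n s : nat) (T : finType) (u : T -> 'I_(n + n)) (a : pred T)
  (G1 : rel 'I_n)
  (hl : 2 <= l) (hlk : 2 * l < k) (hn : 1 <= n)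
  (G1sym : symmetric G1) (G1irr : irreflexive G1)
  (hA1 : forall i : 'I_n, #|Aset u a (lshift n i)| = 2 * k./2 + l)
  (hA2 : forall i : 'I_n, #|Aset u a (rshift n i)| = 2 * k - 2 * l - 3)
  (hs : 1 <= s)
  (v : 'I_(l + (s + 2) * (k - l)) -> T) (hv : injective v)
  (hH : forall t, t <= s.+1 ->
          [|| inH11 u a k G1 (pedge k l v t),
              inH12 u a k l (pedge k l v t)
            | inH2 u k l (pedge k l v t)])
  (hH11 : forall t, t <= s.+1 ->
          inH11 u a k G1 (pedge k l v t) =
          (pedge k l v t == pedge k l v 0) || (pedge k l v t == pedge k l v s.+1)) :
  (forall t, t <= s.+1 -> inH12 u a k l (pedge k l v t) ->
      pedge k l v t = pedge k l v 1 \/ pedge k l v t = pedge k l v s)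
  /\ (inH12 u a k l (pedge k l v 1) -> inH12 u a k l (pedge k l v s) ->
      pedge k l v 1 <> pedge k l v s -> s = 2)
  /\ (forall t, 1 <= t <= s ->
      exists2 j : 'I_n, mintr u (pedge k l v t) = j &
        j \in tr1 u (pedge k l v 0) :&: tr1 u (pedge k l v s.+1)).
Proof.
have hlk1 : l.+1 < k by lia.
pose E := pedge k l v.
have bound t : t <= s.+1 -> t * (k - l) + k <= l + (s + 2) * (k - l).
  by move=> ts; have := leq_mul ts (leqnn (k - l)); rewrite addn2 !mulSn; lia.
have E0 : inH11 u a k G1 (E 0) by rewrite hH11 // eqxx.
have Es : inH11 u a k G1 (E s.+1) by rewrite hH11 // eqxx orbT.
have Emid t : 1 <= t <= s -> inH12 u a k l (E t) || inH2 u k l (E t).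
  move=> /andP [t1 ts]; have := bound t (leqW ts) => bt.
  have n0 : E 0 != E t by apply: pedge_neq => //; have := bound 0 isT; lia.
  have ns : E t != E s.+1 by apply: pedge_neq => //; lia.
  by move: (hH _ (leqW ts)); rewrite hH11 ?leqW // eq_sym (negbTE n0) (negbTE ns).
have Eadj t : t <= s -> l <= #|E t :&: E t.+1|.
  by move=> ts; apply: pedge_overlap => //; [lia | exact: bound].
have Edisj t t' : t.+2 <= t' -> t' <= s.+1 -> [disjoint E t & E t'].
  by move=> tt' _; apply: pedge_disjoint => //; lia.
split; [|split].
- move=> t ts /(mid_H12_position hl hlk1 G1irr hs hA1 hA2 E0 Es Emid Eadj Edisj ts).
  by case=> ->; [left | right].
- exact: (mid_H12_pair hl hlk1 G1irr hs hA2 E0 Es Emid Eadj Edisj).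
- exact: (mid_mintr_tr1 hl hlk1 G1irr hs hA2 E0 Es Emid Eadj Edisj).
Qed.
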